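(* Let $N\ge3$, let $f_1,\dots,f_{N-1}$ be independent variables and $\beta_1,\dots,\beta_{N-2}$ constants. For $m=1,\dots,N-2$ define $$F_m(\lambda)=\prod_{n=m}^{N-2}\Bigl(1+(\lambda+\beta_n)\frac{\partial^2}{\partial f_n\partial f_{n+1}}\Bigr)(f_m f_{m+1}\cdots f_{N-1}),$$ and $F_{N-1}(\lambda)=f_{N-1}$. Then for $m=1,\dots,N-3$, $$F_m(\lambda)=f_mF_{m+1}(\lambda)+(\lambda+\beta_m)F_{m+2}(\lambda),$$ and for $m=1,\dots,N-2$, $\dfrac{\partial F_m(\lambda)}{\partial f_m}=F_{m+1}(\lambda)$. *)

From HB Require Import structures.
From mathcomp Require Import all_boot all_order all_algebra.
From mathcomp Require Import mpoly.
Set Implicit Arguments. Unset Strict Implicit. Unset Printing Implicit Defensive.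
Import GRing.Theory.
Local Open Scope ring_scope.

(* Polynomials in the N-1 variables f_1, ..., f_{N-1}: the ring
   {mpoly R[N.-1]}, where f_k is the variable of index k-1. *)
Section Defs.
Variables (R : comRingType) (N : nat).

(* the variable f_k (k = 1..N-1); 0 outside that range (never used there) *)
Definition fvar (k : nat) : {mpoly R[N.-1]} :=
  match @insub _ (fun i => i < N.-1)%N 'I_N.-1 k.-1 with
  | Some i => 'X_i
  | None => 0
  end.

Definition dvar (k : nat) (p : {mpoly R[N.-1]}) : {mpoly R[N.-1]} :=
  match @insub _ (fun i => i < N.-1)%N 'I_N.-1 k.-1 with
  | Some i => mderiv i p
  | None => 0
  end.

(* The (commuting) operators are composed with n = m outermost. *)
Definition Fpoly (beta : nat -> R) (lam : R) (m : nat) : {mpoly R[N.-1]} :=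
  if m == N.-1 then fvar N.-1
  else foldr (fun n q => q + (lam + beta n) *: dvar n (dvar n.+1 q))
             (\prod_(m <= k < N) fvar k)
             (iota m (N.-1 - m)).
End Defs.

(* Write D_n for the operator 1 + (lam + beta_n) d^2/(df_n df_{n+1}).  For
   n > m the operator D_n does not involve d/df_m, so it commutes with
   multiplication by f_m and with d/df_m; hence
   F_m = D_m (f_m F_{m+1}) and d/df_m F_{m+1} = 0.  Differentiating the first
   identity in f_m gives d/df_m F_m = D_m F_{m+1} = F_{m+1}, and expanding D_m
   gives F_m = f_m F_{m+1} + (lam + beta_m) d/df_{m+1} F_{m+1}, whose last term
   is F_{m+2} by the derivative identity at m+1. *)
From HB Require Import structures.
From mathcomp Require Import all_boot all_order all_algebra.
From mathcomp Require Import mpoly.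
From mathcomp Require Import zify.
Local Open Scope ring_scope.
Import GRing.Theory.

Lemma mderivX1 (R : comRingType) (n : nat) (i j : 'I_n) :
  mderiv i ('X_j : {mpoly R[n]}) = (j == i)%:R.
Proof.
rewrite mderivX mnm1E; have [->|_] := eqVneq j i; last by rewrite scale0r.
rewrite scale1r (_ : U_(i) - U_(i) = 0)%MM ?mpolyX0 //.
by apply/mnmP => l; rewrite mnmBE subnn mnm0E.
Qed.

Section FpolyRecurrence.
Variables (R : comRingType) (N : nat) (beta : nat -> R) (lam : R).
Local Notation f := (fvar R N).

Lemma dvar0 k : dvar k (0 : {mpoly R[N.-1]}) = 0.
Proof. by rewrite /dvar; case: insubP => [i _ _|_]; rewrite ?mderiv0. Qed.

Lemma dvar1 k : dvar k (1 : {mpoly R[N.-1]}) = 0.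
Proof. by rewrite /dvar; case: insubP => [i _ _|_]; rewrite // -mpolyC1 mderivC. Qed.

Lemma dvarD k (p q : {mpoly R[N.-1]}) : dvar k (p + q) = dvar k p + dvar k q.
Proof. by rewrite /dvar; case: insubP => [i _ _|_]; rewrite ?mderivD ?addr0. Qed.

Lemma dvarZ k c (p : {mpoly R[N.-1]}) : dvar k (c *: p) = c *: dvar k p.
Proof. by rewrite /dvar; case: insubP => [i _ _|_]; rewrite ?mderivZ ?scaler0. Qed.

Lemma dvarM k (p q : {mpoly R[N.-1]}) :
  dvar k (p * q) = dvar k p * q + p * dvar k q.
Proof.
by rewrite /dvar; case: insubP => [i _ _|_]; rewrite ?mderivM ?mul0r ?mulr0 ?addr0.
Qed.

Lemma dvar_comm k l (p : {mpoly R[N.-1]}) : dvar k (dvar l p) = dvar l (dvar k p).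
Proof.
rewrite /dvar; case: insubP => [i _ _|_]; case: insubP => [j _ _|_] //;
  by rewrite ?mderiv0 // mderiv_comm.
Qed.

(* [0 < k] is needed: [k.-1] truncates, so [dvar 0] coincides with [dvar 1]. *)
Lemma dvar_fvar k j : (0 < k)%N -> (0 < j < N)%N -> dvar k (f j) = (k == j)%:R.
Proof.
move=> k_gt0 /andP[j_gt0 j_ltN]; rewrite /dvar /fvar.
have [j' _ val_j'|/negP] := insubP 'I_N.-1 j.-1; last by lia.
have [k' _ val_k'|k_out] := insubP 'I_N.-1 k.-1.
  by rewrite mderivX1 -val_eqE val_j' val_k'; congr _%:R; apply/eqP/eqP; lia.
by rewrite (_ : k == j = false) //; apply/negbTE/eqP; lia.
Qed.

Lemma dvar_fvarM k j p : (0 < k)%N -> (0 < j < N)%N ->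
  dvar k (f j * p) = (k == j)%:R * p + f j * dvar k p.
Proof. by move=> k_gt0 j_range; rewrite dvarM dvar_fvar. Qed.

Lemma dvar_prod_fvar k a : (0 < k < a)%N -> dvar k (\prod_(a <= j < N) f j) = 0.
Proof.
move=> k_range; rewrite big_seq_cond.
apply: (big_ind (fun p => dvar k p = 0)); first exact: dvar1.
  by move=> p q dp dq; rewrite dvarM dp dq mul0r mulr0 addr0.
move=> j; rewrite andbT mem_index_iota => j_range.
by rewrite dvar_fvar ?ltn_eqF //; lia.
Qed.

Definition Dop n (q : {mpoly R[N.-1]}) := q + (lam + beta n) *: dvar n (dvar n.+1 q).

Definition Dops (s : seq nat) (q : {mpoly R[N.-1]}) := foldr Dop q s.

Lemma dvar_Dop k n q : dvar k (Dop n q) = Dop n (dvar k q).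
Proof. by rewrite /Dop dvarD dvarZ (dvar_comm k n) (dvar_comm k n.+1). Qed.

Lemma dvar_Dops k s q : dvar k (Dops s q) = Dops s (dvar k q).
Proof. by elim: s => //= n s IH; rewrite dvar_Dop IH. Qed.

Lemma Dop_id n q : dvar n q = 0 -> Dop n q = q.
Proof. by move=> dq; rewrite /Dop dvar_comm dq dvar0 scaler0 addr0. Qed.

Lemma Dops0 s : Dops s 0 = 0.
Proof. by elim: s => //= n s ->; rewrite Dop_id ?dvar0. Qed.

Lemma Dops_fvarM m s q : (0 < m < N)%N -> all (leq m.+1) s ->
  Dops s (f m * q) = f m * Dops s q.
Proof.
move=> m_range; elim: s => //= n s IH /andP[m_lt_n /IH ->].
have dvar_fvarM_ne k p : (m < k)%N -> dvar k (f m * p) = f m * dvar k p.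
  by move=> m_lt_k; rewrite dvar_fvarM ?gtn_eqF ?mul0r ?add0r //; lia.
by rewrite /Dop !dvar_fvarM_ne ?mulrDr ?scalerAr //; lia.
Qed.

Lemma FpolyE m : (m < N)%N ->
  Fpoly N beta lam m = Dops (iota m (N.-1 - m)) (\prod_(m <= k < N) f k).
Proof.
move=> m_ltN; rewrite /Fpoly; case: eqP => [->|//].
by rewrite subnn /= big_ltn ?prednK ?big_geq ?mulr1 //; lia.
Qed.

Lemma Fpoly_Dop m : (0 < m)%N -> (m.+1 < N)%N ->
  Fpoly N beta lam m = Dop m (f m * Fpoly N beta lam m.+1).
Proof.
move=> m_gt0 mS_ltN; have m_ltN := ltnW mS_ltN.
rewrite !FpolyE // big_ltn //.
rewrite (_ : N.-1 - m = (N.-1 - m.+1).+1)%N /=; last by lia.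
by rewrite Dops_fvarM; [|lia|apply/allP => n; rewrite mem_iota; lia].
Qed.

Lemma dvar_Fpoly_eq0 k m : (0 < k < m)%N -> (m < N)%N -> dvar k (Fpoly N beta lam m) = 0.
Proof. by move=> k_range m_ltN; rewrite FpolyE // dvar_Dops dvar_prod_fvar ?Dops0. Qed.

Lemma dvar_Fpoly m : (0 < m)%N -> (m.+1 < N)%N ->
  dvar m (Fpoly N beta lam m) = Fpoly N beta lam m.+1.
Proof.
move=> m_gt0 mS_ltN; rewrite Fpoly_Dop // dvar_Dop dvar_fvarM ?eqxx ?mul1r; try lia.
have dF : dvar m (Fpoly N beta lam m.+1) = 0 by apply: dvar_Fpoly_eq0; lia.
by rewrite dF mulr0 addr0 Dop_id.
Qed.

Lemma Fpoly_rec m : (0 < m)%N -> (m.+2 < N)%N ->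
  Fpoly N beta lam m =
    f m * Fpoly N beta lam m.+1 + (lam + beta m) *: Fpoly N beta lam m.+2.
Proof.
move=> m_gt0 mSS_ltN; rewrite Fpoly_Dop /Dop; [congr (_ + _ *: _) | done | lia].
have dF1 : dvar m.+1 (f m * Fpoly N beta lam m.+1) = f m * Fpoly N beta lam m.+2.
  by rewrite dvar_fvarM ?gtn_eqF ?mul0r ?add0r ?dvar_Fpoly //; lia.
have dF2 : dvar m (Fpoly N beta lam m.+2) = 0 by apply: dvar_Fpoly_eq0; lia.
by rewrite dF1 dvar_fvarM ?eqxx ?mul1r ?dF2 ?mulr0 ?addr0 //; lia.
Qed.

End FpolyRecurrence.

Theorem mainTheorem5 (R : comRingType) (N : nat) (beta : nat -> R) (lam : R) :
  (3 <= N)%N ->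
  (forall m : nat, (1 <= m <= N - 3)%N ->
     Fpoly N beta lam m =
       fvar R N m * Fpoly N beta lam m.+1 + (lam + beta m) *: Fpoly N beta lam m.+2) /\
  (forall m : nat, (1 <= m <= N - 2)%N ->
     dvar m (Fpoly N beta lam m) = Fpoly N beta lam m.+1).
Proof.
move=> _; split=> m /andP[m_gt0 m_le].
  by apply: Fpoly_rec => //; lia.
by apply: dvar_Fpoly => //; lia.
Qed.
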